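(* Let $G$ be a finite group, $X$ a finite $G$-set and $R$ an integral domain. Assume that for every $x\in X$ and every prime divisor $p$ of $[G:\mathrm{stab}_G(x)]$ one has $\{0\}\neq pR\neq R$. Then the ring $\mathrm{End}_{RG}(RX)$ has no central idempotent different from $0$ and $1$.
   Context: $RX$ denotes the permutation $RG$-module with $R$-basis $X$. *)

From HB Require Import structures.
From mathcomp Require Import all_boot all_order all_algebra all_fingroup.
Set Implicit Arguments. Unset Strict Implicit. Unset Printing Implicit Defensive.
Import GRing.Theory.
Local Open Scope ring_scope.

(* The permutation module RX is modelled as row vectors 'rV[R]_#|X|, the basis
   element x being the row vector with a 1 at position enum_rank x.
   The element g acts (on the right, row-vector convention) by the permutation
   matrix sending basis vector x to basis vector (to x g). *)
Definition gperm_mx (R : nzRingType) (aT : finGroupType) (G : {set aT})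
  (X : finType) (to : action G X) (g : aT) : 'M[R]_#|X| :=
  \matrix_(i, j) ((enum_val j == to (enum_val i) g)%:R).

Definition is_RG_endo (R : nzRingType) (aT : finGroupType) (G : {set aT})
  (X : finType) (to : action G X) (A : 'M[R]_#|X|) : Prop :=
  forall g, g \in G -> A *m gperm_mx R to g = gperm_mx R to g *m A.

Definition central_idem_RG_endo (R : nzRingType) (aT : finGroupType)
  (G : {set aT}) (X : finType) (to : action G X) (e : 'M[R]_#|X|) : Prop :=
  [/\ is_RG_endo to e, e *m e = e &
      forall f, is_RG_endo to f -> e *m f = f *m e].

From HB Require Import structures.
From mathcomp Require Import all_boot all_order all_algebra all_fingroup.
From mathcomp Require Import fraction ring.
Set Implicit Arguments. Unset Strict Implicit. Unset Printing Implicit Defensive.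
Import GRing.Theory.
Local Open Scope ring_scope.

(* For an orbit S, the coordinate projection P onto RS is an RG-endomorphism,
   so the central idempotent e commutes with it and eP, (1 - e)P are
   idempotents below P.  Over the fraction field of R the trace of an
   idempotent is its rank, a natural number at most |S|, while
   tr(eP) = |S| e_xx because the diagonal of e is constant on S.  Since every
   prime p dividing |S| = [G : stab x] satisfies {0} <> pR <> R, the equation
   |S| d = r forces |S| to divide r; hence eP is 0 or P.  Finally, the
   endomorphism with all entries 1 on S x T commutes with e, which rules out
   eP_S = 0 and eP_T = P_T for two orbits S and T, so e = 0 or e = 1. *)

Lemma row_base_col_base_idem (F : fieldType) n (A : 'M[F]_n) :
  A *m A = A -> row_base A *m col_base A = 1%:M.
Proof.
move=> AA; have [B BC] := row_fullP (col_base_full A).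
have [B' RB'] := row_freeP (row_base_free A).
have : col_base A *m row_base A *m (col_base A *m row_base A)
       = col_base A *m row_base A by rewrite mulmx_base.
move: (col_base A) (row_base A) BC RB' => C Rb BC RB' CRCR.
have -> : Rb *m C = B *m (C *m Rb *m (C *m Rb)) *m B'.
  by rewrite !mulmxA BC mul1mx -mulmxA RB' mulmx1.
by rewrite CRCR !mulmxA BC mul1mx RB'.
Qed.

Lemma mxtrace_idem (F : fieldType) n (A : 'M[F]_n) :
  A *m A = A -> \tr A = (\rank A)%:R.
Proof.
move=> AA; rewrite -{1}(mulmx_base A) mxtrace_mulC row_base_col_base_idem //.
exact: mxtrace1.
Qed.

Definition frac_rank (R : idomainType) m n (A : 'M[R]_(m, n)) : nat :=
  \rank (map_mx (@tofrac R) A).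

Lemma frac_rank_eq0 (R : idomainType) m n (A : 'M[R]_(m, n)) :
  (frac_rank A == 0)%N = (A == 0).
Proof.
rewrite /frac_rank mxrank_eq0; apply/eqP/eqP => [A0|->]; last exact: map_mx0.
apply/matrixP => i j; move/matrixP/(_ i j): A0; rewrite !mxE => /eqP.
by rewrite tofrac_eq0 => /eqP.
Qed.

Lemma frac_rankM_maxr (R : idomainType) m n p (A : 'M[R]_(m, n)) (B : 'M[R]_(n, p)) :
  (frac_rank (A *m B) <= frac_rank B)%N.
Proof. by rewrite /frac_rank map_mxM mxrankM_maxr. Qed.

Lemma mxtrace_idem_frac (R : idomainType) n (A : 'M[R]_n) :
  A *m A = A -> \tr A = (frac_rank A)%:R.
Proof.
move=> AA; apply/eqP; rewrite -tofrac_eq -(trace_map_mx (@tofrac R)).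
by rewrite mxtrace_idem -?map_mxM ?AA // rmorph_nat.
Qed.

(* [proper_primes R m] is the paper's condition {0} <> pR <> R for every prime p dividing m. *)
Definition proper_primes (R : unitRingType) (m : nat) : Prop :=
  forall p, prime p -> (p %| m)%N -> (p%:R : R) != 0 /\ (p%:R : R) \notin GRing.unit.

Lemma proper_primes_dvd (R : unitRingType) (m k : nat) :
  (k %| m)%N -> proper_primes R m -> proper_primes R k.
Proof. by move=> km Hm p p_pr pk; apply: Hm (dvdn_trans pk km). Qed.

Lemma natr_mul_eq_natr (R : idomainType) (m r : nat) (d : R) :
  (0 < m)%N -> proper_primes R m -> m%:R * d = r%:R ->
  exists2 a, r = (m * a)%N & d = a%:R.
Proof.
elim/ltn_ind: m r d => m IH r d m_gt0 Hm mdr.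
have [m_le1 | m_gt1] := leqP m 1.
  have m1 : m = 1%N by apply/eqP; rewrite eqn_leq m_le1.
  by exists r; rewrite -?mdr m1 ?mul1n ?mul1r.
have p_pr := pdiv_prime m_gt1; set p := pdiv m in p_pr *.
have [p_neq0 p_nunit] := Hm p p_pr (pdiv_dvd m).
have Em : m = (p * (m %/ p))%N by rewrite mulnC divnK // pdiv_dvd.
set m' := (m %/ p)%N in Em.
(* If p did not divide r, Bezout's identity k r = l p + 1 would make p a unit. *)
have p_dvd_r : (p %| r)%N.
  apply: contraR p_nunit => p_ndvd_r.
  have r_gt0 : (0 < r)%N by move: p_ndvd_r; case: posnP => // ->; rewrite dvdn0.
  have [k l Ekl _] := egcdnP p r_gt0.
  have : (k * r)%:R = (l * p + 1)%:R :> R.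
    by rewrite Ekl (eqP (_ : coprime r p)) // coprime_sym prime_coprime.
  rewrite natrD !natrM -mdr Em natrM => Ekl'.
  apply/unitrPr; exists (k%:R * m'%:R * d - l%:R).
  transitivity (k%:R * (p%:R * m'%:R * d) - l%:R * p%:R : R); first by ring.
  by rewrite Ekl' addrAC subrr add0r.
have [r' Er] := dvdnP p_dvd_r.
have m'dr' : m'%:R * d = r'%:R.
  by apply: (mulfI p_neq0); rewrite mulrA -!natrM -Em mdr Er mulnC.
have m'_gt0 : (0 < m')%N by move: m_gt0; rewrite Em muln_gt0 => /andP[].
have m'_lt_m : (m' < m)%N by rewrite Em ltn_Pmull ?prime_gt1.
have Hm' : proper_primes R m' by apply: proper_primes_dvd Hm; rewrite Em dvdn_mull.
have [a Ea da] := IH m' m'_lt_m r' d m'_gt0 Hm' m'dr'.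
by exists a; rewrite // Er Ea Em mulnC mulnA.
Qed.

Section SetProjection.
Variable X : finType.

Lemma matrix_enum_rankP (R : Type) (A B : 'M[R]_#|X|) :
  (forall x y, A (enum_rank x) (enum_rank y) = B (enum_rank x) (enum_rank y)) ->
  A = B.
Proof. by move=> AB; apply/matrixP => i j; rewrite -[i]enum_valK -[j]enum_valK. Qed.

Definition setproj_mx (R : nzSemiRingType) (S : {set X}) : 'M[R]_#|X| :=
  diag_mx (\row_i (enum_val i \in S)%:R).

Definition link_mx (R : nzSemiRingType) (S T : {set X}) : 'M[R]_#|X| :=
  \matrix_(i, j) ((enum_val i \in S) && (enum_val j \in T))%:R.

Lemma big_enum_val_all {T : Type} {idx : T} {op : Monoid.com_law idx} (F : X -> T) :
  \big[op/idx]_(i < #|X|) F (enum_val i) = \big[op/idx]_x F x.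
Proof. by rewrite -big_enum_val. Qed.

Variable R : nzSemiRingType.
Implicit Types (S T : {set X}) (A : 'M[R]_#|X|).

Lemma setproj_mxE S x y :
  setproj_mx R S (enum_rank x) (enum_rank y) = ((x == y) && (x \in S))%:R.
Proof.
by rewrite !mxE enum_rankK (inj_eq enum_rank_inj); case: eqP; case: (x \in S).
Qed.

Lemma link_mxE S T x y :
  link_mx R S T (enum_rank x) (enum_rank y) = ((x \in S) && (y \in T))%:R.
Proof. by rewrite mxE !enum_rankK. Qed.

Lemma mulmx_setprojE A S x y :
  (A *m setproj_mx R S) (enum_rank x) (enum_rank y)
  = A (enum_rank x) (enum_rank y) * (y \in S)%:R.
Proof. by rewrite mul_mx_diag !mxE enum_rankK. Qed.

Lemma setproj_mulmxE A S x y :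
  (setproj_mx R S *m A) (enum_rank x) (enum_rank y)
  = (x \in S)%:R * A (enum_rank x) (enum_rank y).
Proof. by rewrite mul_diag_mx !mxE enum_rankK. Qed.

Lemma setproj_mx_idem S : setproj_mx R S *m setproj_mx R S = setproj_mx R S.
Proof.
apply: matrix_enum_rankP => x y; rewrite setproj_mulmxE setproj_mxE.
by case: (x \in S); rewrite ?andbT ?andbF ?mul1r ?mul0r.
Qed.

Lemma setproj_link_mx S T : setproj_mx R S *m link_mx R S T = link_mx R S T.
Proof.
apply: matrix_enum_rankP => x y; rewrite setproj_mulmxE link_mxE.
by case: (x \in S); rewrite ?mul1r ?mul0r.
Qed.

Lemma link_setproj_mx S T : link_mx R S T *m setproj_mx R T = link_mx R S T.
Proof.
apply: matrix_enum_rankP => x y; rewrite mulmx_setprojE link_mxE.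
by case: (y \in T); rewrite ?andbT ?andbF ?mulr1 ?mulr0.
Qed.

Lemma mxtrace_setproj S : \tr (setproj_mx R S) = #|S|%:R.
Proof.
rewrite mxtrace_diag (eq_bigr (fun i => (enum_val i \in S)%:R)) => [|i _]; last by rewrite mxE.
rewrite (big_enum_val_all (fun x => (x \in S)%:R)) -sumr_const [RHS]big_mkcond.
by apply: eq_bigr => x _; case: (x \in S).
Qed.

Lemma mxtrace_mulmx_setproj A S :
  \tr (A *m setproj_mx R S) = \sum_(x in S) A (enum_rank x) (enum_rank x).
Proof.
set F := fun x => (A *m setproj_mx R S) (enum_rank x) (enum_rank x).
rewrite /mxtrace (eq_bigr (fun i => F (enum_val i))) => [|i _]; last by rewrite /F enum_valK.
rewrite big_enum_val_all [RHS]big_mkcond; apply: eq_bigr => x _.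
by rewrite /F mulmx_setprojE; case: (x \in S); rewrite ?mulr1 ?mulr0.
Qed.

End SetProjection.

Lemma mxrank_sum_le (F : fieldType) (I : finType) m n (M : I -> 'M[F]_(m, n)) :
  (\rank (\sum_i M i)%R <= \sum_i \rank (M i))%N.
Proof.
apply: (big_ind2 (fun A k => \rank A <= k)%N); first by rewrite mxrank0.
  by move=> A a B b rA rB; apply: leq_trans (mxrank_add A B) (leq_add rA rB).
by [].
Qed.

Lemma mxrank_setproj_le (F : fieldType) (X : finType) (S : {set X}) :
  (\rank (setproj_mx F S) <= #|S|)%N.
Proof.
rewrite /setproj_mx diag_mx_sum_delta; apply: leq_trans (mxrank_sum_le _) _.
rewrite -(sum1_card (mem S)) [X in (_ <= X)%N]big_mkcond /=.
rewrite -(big_enum_val_all (fun x => if x \in S then 1%N else 0%N)).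
apply: leq_sum => i _; rewrite mxE.
by case: (_ \in S); rewrite ?scale1r ?scale0r ?mxrank_delta ?mxrank0.
Qed.

Lemma map_setproj_mx (R R' : nzSemiRingType) (f : {rmorphism R -> R'}) (X : finType)
    (S : {set X}) :
  map_mx f (setproj_mx R S) = setproj_mx R' S.
Proof. by rewrite map_diag_mx; congr diag_mx; apply/rowP => i; rewrite !mxE rmorph_nat. Qed.

Lemma frac_rank_setproj_le (R : idomainType) (X : finType) (S : {set X}) :
  (frac_rank (setproj_mx R S) <= #|S|)%N.
Proof. by rewrite /frac_rank map_setproj_mx mxrank_setproj_le. Qed.

Lemma idem_mulmx_comm (R : nzRingType) n (e P : 'M[R]_n) :
  e *m e = e -> P *m P = P -> e *m P = P *m e -> e *m P *m (e *m P) = e *m P.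
Proof.
by move=> ee PP eP; rewrite mulmxA -(mulmxA e) -eP mulmxA ee -mulmxA PP.
Qed.

Lemma idem_trace_dichotomy (R : idomainType) n (f : 'M[R]_n) (m : nat) (d : R) :
  (0 < m)%N -> proper_primes R m -> f *m f = f -> (frac_rank f <= m)%N ->
  \tr f = m%:R * d -> f = 0 \/ d = 1.
Proof.
move=> m_gt0 Hm ff rank_f tr_f.
have [a Ea ->] := natr_mul_eq_natr m_gt0 Hm (etrans (esym tr_f) (mxtrace_idem_frac ff)).
have : (a <= 1)%N by rewrite -(leq_pmul2l m_gt0) -Ea muln1.
case: a Ea => [|[|//]] Ea _; [left | by right].
by apply/eqP; rewrite -frac_rank_eq0 Ea muln0.
Qed.

Section PermutationModule.
Variables (gT : finGroupType) (G : {group gT}) (X : finType) (to : action G X).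

Lemma act_eq_inv g x y : g \in G -> (y == to x g) = (x == to y g^-1%g).
Proof. by move=> gG; apply/eqP/eqP => ->; rewrite ?actKin ?actKVin. Qed.

Lemma mulmx_gperm_mxE (R : nzRingType) (A : 'M[R]_#|X|) g x y : g \in G ->
  (A *m gperm_mx R to g) (enum_rank x) (enum_rank y)
  = A (enum_rank x) (enum_rank (to y g^-1%g)).
Proof.
move=> gG; rewrite mxE (bigD1 (enum_rank (to y g^-1%g))) //= mxE !enum_rankK.
rewrite actKVin // eqxx mulr1 big1 ?addr0 // => k /negbTE k_neq.
by rewrite mxE enum_rankK act_eq_inv // -(inj_eq enum_rank_inj) enum_valK k_neq mulr0.
Qed.

Lemma gperm_mulmx_mxE (R : nzRingType) (A : 'M[R]_#|X|) g x y :
  (gperm_mx R to g *m A) (enum_rank x) (enum_rank y)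
  = A (enum_rank (to x g)) (enum_rank y).
Proof.
rewrite mxE (bigD1 (enum_rank (to x g))) //= mxE !enum_rankK eqxx mul1r.
rewrite big1 ?addr0 // => k /negbTE k_neq.
by rewrite mxE enum_rankK -(inj_eq enum_rank_inj) enum_valK k_neq mul0r.
Qed.

Lemma is_RG_endoP (R : nzRingType) (A : 'M[R]_#|X|) :
  is_RG_endo to A <->
  forall g x y, g \in G ->
    A (enum_rank (to x g)) (enum_rank (to y g)) = A (enum_rank x) (enum_rank y).
Proof.
split=> [A_endo g x y gG | A_inv g gG].
  have := congr1 (fun M : 'M[R]_#|X| => M (enum_rank x) (enum_rank (to y g)))
                 (A_endo g gG).
  by rewrite /= mulmx_gperm_mxE // gperm_mulmx_mxE actKin // => ->.
apply: matrix_enum_rankP => x y; rewrite mulmx_gperm_mxE // gperm_mulmx_mxE.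
by rewrite -[in RHS](actKVin to gG y) A_inv.
Qed.

Variable R : nzRingType.
Implicit Types S T : {set X}.

Lemma setproj_mx_endo S : [acts G, on S | to] -> is_RG_endo to (setproj_mx R S).
Proof.
move=> actsS; apply/is_RG_endoP => g x y gG.
by rewrite !setproj_mxE (inj_eq (act_inj to g)) (acts_act actsS).
Qed.

Lemma link_mx_endo S T :
  [acts G, on S | to] -> [acts G, on T | to] -> is_RG_endo to (link_mx R S T).
Proof.
move=> actsS actsT; apply/is_RG_endoP => g x y gG.
by rewrite !link_mxE (acts_act actsS) ?(acts_act actsT).
Qed.

End PermutationModule.

Section CentralIdempotent.
Variables (gT : finGroupType) (G : {group gT}) (X : finType) (to : action G X).
Variables (R : idomainType) (e : 'M[R]_#|X|).
Hypothesis e_central : central_idem_RG_endo to e.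

Lemma setproj_link_obstruction S T x y :
  [acts G, on S | to] -> [acts G, on T | to] -> x \in S -> y \in T ->
  e *m setproj_mx R S = 0 -> e *m setproj_mx R T <> setproj_mx R T.
Proof.
case: e_central => _ _ e_comm actsS actsT xS yT eS eT.
set J := link_mx R S T.
have eJ : e *m J = 0 by rewrite /J -setproj_link_mx mulmxA eS mul0mx.
have Je : J *m e = J.
  by rewrite /J -link_setproj_mx -mulmxA -(e_comm _ (setproj_mx_endo R actsT)) eT.
have /matrixP/(_ (enum_rank x) (enum_rank y)) : J = 0.
  by rewrite -Je -(e_comm _ (link_mx_endo R actsS actsT)) eJ.
by rewrite link_mxE xS yT mxE => /eqP; rewrite oner_eq0.
Qed.

Lemma orbit_setproj_cut x0 (S := orbit to G x0) :
  proper_primes R #|S| -> e *m setproj_mx R S = 0 \/ e *m setproj_mx R S = setproj_mx R S.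
Proof.
case: e_central => e_endo ee e_comm HS; set P := setproj_mx R S.
have PP : P *m P = P := setproj_mx_idem R S.
have eP : e *m P = P *m e := e_comm P (setproj_mx_endo R (acts_orbit to x0 (subxx G))).
have ee' : (1%:M - e) *m (1%:M - e) = 1%:M - e.
  by rewrite mulmxBl mul1mx mulmxBr mulmx1 ee subrr subr0.
have eP' : (1%:M - e) *m P = P *m (1%:M - e).
  by rewrite mulmxBl mulmxBr mul1mx mulmx1 eP.
have S_gt0 : (0 < #|S|)%N by apply/card_gt0P; exists x0; apply: orbit_refl.
(* The diagonal of e is constant along the orbit, since e commutes with the action. *)
set d := e (enum_rank x0) (enum_rank x0).
have tr_eP : \tr (e *m P) = #|S|%:R * d.
  rewrite mxtrace_mulmx_setproj mulr_natl -sumr_const.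
  apply: eq_bigr => _ /orbitP[g gG <-].
  exact: (proj1 (is_RG_endoP to e) e_endo).
have tr_eP' : \tr ((1%:M - e) *m P) = #|S|%:R * (1 - d).
  by rewrite mulmxBl mul1mx raddfB /= mxtrace_setproj tr_eP mulrBr mulr1.
have rank_le (f : 'M[R]_#|X|) : (frac_rank (f *m P) <= #|S|)%N :=
  leq_trans (frac_rankM_maxr _ _) (frac_rank_setproj_le R S).
have [|d1] := idem_trace_dichotomy S_gt0 HS (idem_mulmx_comm ee PP eP) (rank_le e) tr_eP.
  by left.
have [|] := idem_trace_dichotomy S_gt0 HS (idem_mulmx_comm ee' PP eP') (rank_le _) tr_eP'.
  by rewrite mulmxBl mul1mx => /eqP; rewrite subr_eq0 eq_sym => /eqP; right.
by rewrite d1 subrr => /eqP; rewrite eq_sym oner_eq0.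
Qed.

End CentralIdempotent.

Unset Implicit Arguments.

Theorem proposition3p3 (gT : finGroupType) (G : {group gT}) (X : finType)
  (to : action G X) (R : idomainType) :
  (forall (x : X) (p : nat), prime p -> (p %| #|G : 'C_G[x | to]|%g)%N ->
     (p%:R : R) != 0 /\ (p%:R : R) \notin GRing.unit) ->
  forall e : 'M[R]_#|X|, central_idem_RG_endo to e -> e = 0 \/ e = 1%:M.
Proof.
move=> Hp e e_central.
pose P x := setproj_mx R (orbit to G x).
have acts_orb x : [acts G, on orbit to G x | to] := acts_orbit to x (subxx G).
have cut x : e *m P x = 0 \/ e *m P x = P x.
  by apply: orbit_setproj_cut => // p p_pr; rewrite card_orbit_in //; apply: Hp.
have e_entry x y : e (enum_rank x) (enum_rank y) = (e *m P y) (enum_rank x) (enum_rank y).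
  by rewrite mulmx_setprojE orbit_refl mulr1.
have [x ePx0 | ePx_neq0] := pickP (fun x => e *m P x == 0).
  left; apply: matrix_enum_rankP => u v; rewrite e_entry.
  have [-> | ePv] := cut v; first by [].
  by case: (setproj_link_obstruction e_central (acts_orb x) (acts_orb v)
    (orbit_refl _ _ x) (orbit_refl _ _ v) (eqP ePx0) ePv).
right; apply: matrix_enum_rankP => u v; rewrite e_entry.
have [ePv | ->] := cut v; first by move: (ePx_neq0 v); rewrite /= ePv eqxx.
rewrite setproj_mxE !mxE (inj_eq enum_rank_inj).
by case: eqP => [->|]; rewrite ?orbit_refl.
Qed.
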